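(* Let $1\le b\le k$ be integers. The number of words $w$ of length $k$ over the alphabet $\{1,\dots,b\}$ such that every letter $1,\dots,b$ occurs in $w$ at least once and $w$ avoids each of the patterns $111$, $212$, $112$ and $213$ equals $$d_{k,b}=\binom{b}{k-b}C_b,$$ where $C_b=\frac{1}{b+1}\binom{2b}{b}$ is the $b$-th Catalan number (and the binomial coefficient is $0$ when $k-b>b$).
   Context: A word $w$ contains a pattern $p=p_1\cdots p_m$ (a word over positive integers) if $w$ has a subsequence $w_{i_1}\cdots w_{i_m}$, $i_1<\dots<i_m$, that is order-isomorphic to $p$, i.e. $w_{i_s}<w_{i_t}$ iff $p_s<p_t$ and $w_{i_s}=w_{i_t}$ iff $p_s=p_t$ for all $s,t$; otherwise $w$ avoids $p$. *)

From mathcomp Require Import all_boot.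
Set Implicit Arguments. Unset Strict Implicit. Unset Printing Implicit Defensive.

Definition contains (w p : seq nat) : bool :=
  [exists f : {ffun 'I_(size p) -> 'I_(size w)},
     [forall s : 'I_(size p), forall t : 'I_(size p),
        [&& (s < t) ==> (f s < f t),
            (nth 0 w (f s) < nth 0 w (f t)) == (nth 0 p s < nth 0 p t) &
            (nth 0 w (f s) == nth 0 w (f t)) == (nth 0 p s == nth 0 p t)]]].

Definition avoids (w p : seq nat) : bool := ~~ contains w p.

Definition catalan (b : nat) : nat := 'C(b.*2, b) %/ b.+1.

(* words of length k over {1..b}: letter i : 'I_b represents the letter i+1 *)
Definition word_of (b k : nat) (w : k.-tuple 'I_b) : seq nat :=
  [seq (val i).+1 | i <- w].

From mathcomp Require Import all_boot zify.
Set Implicit Arguments. Unset Strict Implicit. Unset Printing Implicit Defensive.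

(* Let w avoid 111, 212, 112, 213 and use exactly the letters lo+1, ..., lo+n.
   Its smallest letter x = lo+1 occurs once or twice, and a second occurrence
   is the last letter; so w = a x g t with t empty or t = x, all letters of g
   are smaller than all letters of a (a letter y of a and z of g with y <= z
   give 212 or 213), and a, g are again such words on two consecutive blocks
   of letters.  Conversely every such a x g t is admissible.  Hence, with
   D(x, y) the generating function by length and number of letters,
   D = 1 + y (x + x^2) D^2, so D is the Catalan series in y (x + x^2) and the
   coefficient of x^k y^b is C_b binom(b, k - b).  To avoid series, we
   enumerate sequences of m such words on consecutive blocks (stacks): their
   number satisfies the forest recursion of the ballot numbers, whose value
   at m = 1 is the Catalan number. *)

Section SeqFacts.
Variables (T : eqType) (x0 : T).
Implicit Types (x a b c : T) (s u v w : seq T).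

Lemma subseq2_nth w i j : i < j < size w ->
  subseq [:: nth x0 w i; nth x0 w j] w.
Proof.
elim: w i j => [|y w IH] i j; first by rewrite ltn0 andbF.
case: i j => [|i] [|j] // hij.
  by rewrite /= eqxx sub1seq mem_nth.
by apply: subseq_trans (subseq_cons w y); apply: IH.
Qed.

Lemma subseq3_nth w i j l : i < j < l -> l < size w ->
  subseq [:: nth x0 w i; nth x0 w j; nth x0 w l] w.
Proof.
elim: w i j l => [|y w IH] i j l hijl; first by rewrite ltn0.
case: i j l hijl => [|i] [|j] [|l]; rewrite ?andbF // => hijl hl.
  by rewrite /= eqxx; apply: subseq2_nth; move: hijl hl => /=; lia.
by apply: subseq_trans (subseq_cons w y); apply: IH.
Qed.

Lemma nth_subseq2 w a b : subseq [:: a; b] w ->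
  exists i j, [/\ i < j < size w, nth x0 w i = a & nth x0 w j = b].
Proof.
elim: w => [|y w IH] //=; case: eqP => [->|_] h.
  by exists 0, (index b w).+1; rewrite /= ltnS index_mem -sub1seq h nth_index -?sub1seq.
by have [i [j [hij <- <-]]] := IH h; exists i.+1, j.+1.
Qed.

Lemma nth_subseq3 w a b c : subseq [:: a; b; c] w ->
  exists i j l, [/\ i < j < l, l < size w & [:: nth x0 w i; nth x0 w j; nth x0 w l] = [:: a; b; c]].
Proof.
elim: w => [|y w IH] //=; case: eqP => [->|_] h.
  by have [j [l [hjl <- <-]]] := nth_subseq2 h; exists 0, j.+1, l.+1; split=> //=; lia.
by have [i [j [l [hijl hl <-]]]] := IH h; exists i.+1, j.+1, l.+1.
Qed.

Lemma subseq_catP s u v : subseq s (u ++ v) ->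
  exists s1 s2, [/\ s = s1 ++ s2, subseq s1 u & subseq s2 v].
Proof.
elim: u s => [|y u IH] s /=; first by exists [::], s.
case: s => [|x s]; first by exists [::], [::]; rewrite !sub0seq.
case: eqP => [-> | _] /IH [s1 [s2 [-> h1 h2]]].
  by exists (y :: s1), s2; rewrite /= eqxx.
by exists s1, s2; split=> //; apply: subseq_trans h1 (subseq_cons _ _).
Qed.

Lemma subseq2_cat a b u v : subseq [:: a; b] (u ++ v) ->
  [\/ subseq [:: a; b] u, a \in u /\ b \in v | subseq [:: a; b] v].
Proof.
case/subseq_catP => [[|x1 [|x2 [|x3 s1]]] [s2 [/= e h1 h2]]].
- by rewrite e; apply: Or33.
- by case: e h1 h2 => -> <-; rewrite !sub1seq => ha hb; apply: Or32.
- by case: e h1 => -> -> _; apply: Or31.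
- by case: e.
Qed.

Lemma subseq3_cat a b c u v : subseq [:: a; b; c] (u ++ v) ->
  [\/ subseq [:: a; b; c] u, subseq [:: a; b] u /\ c \in v,
      a \in u /\ subseq [:: b; c] v | subseq [:: a; b; c] v].
Proof.
case/subseq_catP => [[|x1 [|x2 [|x3 [|x4 s1]]]] [s2 [/= e h1 h2]]].
- by rewrite e; apply: Or44.
- by case: e h1 h2 => -> <-; rewrite sub1seq => ha hbc; apply: Or43.
- by case: e h1 h2 => -> -> <-; rewrite sub1seq => hab hc; apply: Or42.
- by case: e h1 => -> -> -> _; apply: Or41.
- by case: e.
Qed.

Lemma subseq2_mem a b s : subseq [:: a; b] s -> a \in s /\ b \in s.
Proof. by move/mem_subseq => h; split; apply: h; rewrite !inE eqxx ?orbT. Qed.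

Lemma split_first x s : x \in s ->
  exists s1 s2, s = s1 ++ x :: s2 /\ x \notin s1.
Proof.
move=> hx; exists (take (index x s) s), (drop (index x s).+1 s).
by rewrite -drop_index // cat_take_drop in_take // ltnn.
Qed.

Lemma eq_pivot x s1 s2 s1' s2' : x \notin s1 -> x \notin s1' ->
  s1 ++ x :: s2 = s1' ++ x :: s2' -> s1 = s1' /\ s2 = s2'.
Proof.
move=> h1 h1' e; have hsz : size s1 = size s1'.
  by rewrite -(index_pivot s2 h1) -(index_pivot s2' h1') e.
by move/eqP: e; rewrite eqseq_cat // => /andP [/eqP -> /eqP [->]].
Qed.

End SeqFacts.

(* The four disjuncts say that a b c is order-isomorphic to 111, 212, 112, 213. *)
Definition forbidden (a b c : nat) : bool :=
  [|| (a == b) && (b == c), (a == c) && (b < a), (a == b) && (a < c) | (b < a) && (a < c)].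

Definition admissible (w : seq nat) : Prop :=
  forall a b c, subseq [:: a; b; c] w -> ~~ forbidden a b c.

Definition same_order (x y u v : nat) : bool :=
  ((x < y) == (u < v)) && ((x == y) == (u == v)).

Lemma contains3P w p0 p1 p2 : contains w [:: p0; p1; p2] <->
  exists a b c, subseq [:: a; b; c] w /\
    [&& same_order a b p0 p1, same_order b c p1 p2 & same_order a c p0 p2].
Proof.
split.
  pose o0 : 'I_3 := @Ordinal 3 0 isT; pose o1 : 'I_3 := @Ordinal 3 1 isT.
  pose o2 : 'I_3 := @Ordinal 3 2 isT.
  case/existsP => f /forallP H.
  have /forallP /(_ o1) /and3P [/implyP /(_ isT) h01 e01 f01] := H o0.
  have /forallP /(_ o2) /and3P [/implyP /(_ isT) h12 e12 f12] := H o1.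
  have /forallP /(_ o2) /and3P [_ e02 f02] := H o0.
  exists (nth 0 w (f o0)), (nth 0 w (f o1)), (nth 0 w (f o2)); split.
    by apply: subseq3_nth; rewrite ?h01 ?h12 ?ltn_ord.
  by rewrite /same_order e01 f01 e12 f12 e02 f02.
case=> a [b [c [/(nth_subseq3 0) [i [j [l [/andP [hij hjl] hl e]]]]]]] /and3P [hab hbc hac].
pose idx (s : 'I_3) := nth l [:: i; j; l] s.
have hf s : idx s < size w.
  by case: s => [[|[|[|//]]] hs]; rewrite /idx /= ?(ltn_trans hij) ?(ltn_trans hjl).
apply/existsP; exists [ffun s => Ordinal (hf s)]; apply/forallP => s; apply/forallP => t.
move: hab hbc hac; case: e => <- <- <-; rewrite /same_order !ffunE /idx /=.
by case: s t => [[|[|[|//]]] hs] [[|[|[|//]]] ht] /=; lia.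
Qed.

Lemma avoids_forbidden w :
  [&& avoids w [:: 1; 1; 1], avoids w [:: 2; 1; 2], avoids w [:: 1; 1; 2]
    & avoids w [:: 2; 1; 3]] <-> admissible w.
Proof.
split=> [/and4P [n111 n212 n112 n213] a b c hs|hw].
  apply/negP; rewrite {1}/forbidden => /or4P [] hp;
    [move/negP: n111 | move/negP: n212 | move/negP: n112 | move/negP: n213];
    by apply; apply/contains3P; exists a, b, c; split=> //; rewrite /same_order; lia.
apply/and4P; split; apply/negP => /contains3P [a [b [c [hs hp]]]];
  by move/negP: (hw a b c hs); apply; rewrite /forbidden; move: hp; rewrite /same_order; lia.
Qed.

Lemma admissible_subseq u w : subseq u w -> admissible w -> admissible u.
Proof. by move=> huw hw a b c h; apply: hw; apply: subseq_trans huw. Qed.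

Lemma admissible_cat u v : admissible u -> admissible v ->
  (forall y z, y \in u -> z \in v -> z < y) -> admissible (u ++ v).
Proof.
move=> hu hv hlt a b c /subseq3_cat [|[/subseq2_mem [ha hb] hc]|[ha /subseq2_mem [hb hc]]|].
- exact: hu.
- by have := hlt _ _ ha hc; have := hlt _ _ hb hc; rewrite /forbidden; lia.
- by have := hlt _ _ ha hb; have := hlt _ _ ha hc; rewrite /forbidden; lia.
- exact: hv.
Qed.

Lemma admissible_wrap x g t : admissible g -> (forall y, y \in g -> x < y) ->
  t = [::] \/ t = [:: x] -> admissible (x :: g ++ t).
Proof.
move=> hg hgt ht a b c.
have hsz : size t <= 1 by case: ht => ->.
have htx y : y \in t -> y = x by case: ht => -> //; rewrite inE => /eqP.
rewrite -[x :: _]cat1s => /subseq3_cat [/size_subseq //|[/size_subseq //]|[]|].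
  rewrite inE => /eqP -> /subseq2_cat [/subseq2_mem [/hgt hb /hgt hc]|[/hgt hb /htx ->]|].
  - by rewrite /forbidden; lia.
  - by rewrite /forbidden; lia.
  - by move/size_subseq => /=; lia.
case/subseq3_cat => [/hg //|[/subseq2_mem [/hgt ha /hgt hb] /htx ->]|[_]|].
- by rewrite /forbidden; lia.
- by move/size_subseq => /=; lia.
- by move/size_subseq => /=; lia.
Qed.

Lemma foldr_maxn_mem (lo : nat) v : foldr maxn lo v \in lo :: v.
Proof.
elim: v => [|y v IH] /=; first exact: mem_head.
move: IH; rewrite !inE; case: leqP => _; last by rewrite eqxx orbT.
by case/orP => ->; rewrite ?orbT.
Qed.
Lemma leq_foldr_maxn (lo : nat) v y : y \in lo :: v -> y <= foldr maxn lo v.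
Proof.
elim: v y => [|z v IH] y /=; first by rewrite inE => /eqP ->.
rewrite !inE leq_max => /or3P [/eqP ->|/eqP ->|hy].
- by rewrite IH ?orbT ?mem_head.
- by rewrite leqnn.
- by rewrite IH ?orbT // inE hy orbT.
Qed.

Definition spans (lo n : nat) (w : seq nat) : Prop :=
  forall y, (y \in w) = (lo < y <= lo + n).

Lemma spans0 lo w : spans lo 0 w -> w = [::].
Proof. by case: w => // y w /(_ y); rewrite mem_head; lia. Qed.

Lemma spans_cat_lt lo n u v : spans lo n (u ++ v) ->
    (forall y z, y \in u -> z \in v -> z < y) ->
  exists2 n1, n1 <= n & spans lo n1 v /\ spans (lo + n1) (n - n1) u.
Proof.
move=> huv hlt; set m := foldr maxn lo v.
have hvm y : y \in v -> y <= m by move=> hy; apply: leq_foldr_maxn; rewrite inE hy orbT.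
have hlo : lo <= m by apply: leq_foldr_maxn; exact: mem_head.
have hu y : y \in u -> lo < y <= lo + n by rewrite -huv mem_cat => ->.
have hv y : y \in v -> lo < y <= lo + n by rewrite -huv mem_cat orbC => ->.
have hmv : m != lo -> m \in v.
  by move=> hm; move: (foldr_maxn_mem lo v); rewrite inE (negPf hm).
have hum y : y \in u -> m < y.
  by move=> hy; case: (eqVneq m lo) => [->|/hmv/(hlt _ _ hy)//]; have := hu _ hy; lia.
have hmn : m <= lo + n by case: (eqVneq m lo) => [->|/hmv/hv]; lia.
exists (m - lo); first lia.
split=> y; apply/idP/idP.
- by move=> hy; have := hv _ hy; have := hvm _ hy; lia.
- move=> hy; have : y \in u ++ v by rewrite huv; lia.
  by rewrite mem_cat => /orP [/hum|//]; lia.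
- by move=> hy; have := hu _ hy; have := hum _ hy; lia.
- move=> hy; have : y \in u ++ v by rewrite huv; lia.
  by rewrite mem_cat => /orP [//|/hvm]; lia.
Qed.

Lemma admissible_min_split x w : admissible w -> x \in w ->
    (forall y, y \in w -> x <= y) ->
  exists a g t, [/\ w = a ++ x :: g ++ t, x \notin a, x \notin g & t = [::] \/ t = [:: x]].
Proof.
move=> hw hx hmin; have [a [r [ew hxa]]] := split_first hx.
have [hxr|hxr] := boolP (x \in r); last by exists a, r, [::]; rewrite cats0; split=> //; left.
have [g [[|y s] [er hxg]]] := split_first hxr; first by exists a, g, [:: x]; rewrite -er; split=> //; right.
have hsub : subseq [:: x; x; y] w.
  rewrite ew er; apply: subseq_trans (suffix_subseq a _); rewrite /= eqxx.
  by apply: subseq_trans (suffix_subseq g _); rewrite /= eqxx eqxx sub0seq.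
have hy : y \in w by rewrite ew er !(mem_cat, inE) eqxx !orbT.
by have := hw _ _ _ hsub; have := hmin _ hy; rewrite /forbidden; lia.
Qed.

Lemma admissible_sandwich w x y z : admissible w -> subseq [:: y; x; z] w ->
  x < y -> x < z -> z < y.
Proof. by move=> hw /hw; rewrite /forbidden; lia. Qed.

Lemma admissible_decomp lo n w : admissible w -> spans lo n.+1 w ->
  exists a g t n1, [/\ w = a ++ lo.+1 :: g ++ t, t = [::] \/ t = [:: lo.+1], n1 <= n &
    [/\ admissible a, admissible g, spans lo.+1 n1 g & spans (lo.+1 + n1) (n - n1) a]].
Proof.
move=> hw hs; set x := lo.+1.
have hxw : x \in w by rewrite hs; lia.
have hmin y : y \in w -> x <= y by rewrite hs; lia.
have [a [g [t [ew hxa hxg ht]]]] := admissible_min_split hw hxw hmin.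
have htx y : y \in t -> y = x by case: ht => -> //; rewrite inE => /eqP.
have hag : spans x n (a ++ g).
  move=> y; have := hs y; rewrite ew !(mem_cat, inE).
  case: (eqVneq y x) => [->|nyx]; first by rewrite (negPf hxa) (negPf hxg); lia.
  by case: (boolP (y \in t)) => [/htx/eqP|_]; rewrite ?(negPf nyx) ?orbF //; lia.
have hlt y z : y \in a -> z \in g -> z < y.
  move=> hy hz; apply: (admissible_sandwich (x := x) hw).
  - rewrite ew -cat1s; apply: cat_subseq; first by rewrite sub1seq.
    by rewrite /= eqxx sub1seq mem_cat hz.
  - by move: (hag y); rewrite mem_cat hy; lia.
  - by move: (hag z); rewrite mem_cat hz orbT; lia.
have [n1 hn1 [hg ha]] := spans_cat_lt hag hlt.
exists a, g, t, n1; split=> //; split=> //; apply: admissible_subseq hw; rewrite ew.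
  exact: prefix_subseq.
apply: subseq_trans (suffix_subseq a _); apply: subseq_trans (subseq_cons _ x).
exact: prefix_subseq.
Qed.

Fixpoint stacked (lo b k : nat) (ws : seq (seq nat)) : Prop :=
  if ws is w :: ws' then
    exists n, [/\ n <= b, size w <= k, spans lo n w, admissible w &
                  stacked (lo + n) (b - n) (k - size w) ws']
  else b = 0 /\ k = 0.

Lemma stacked_nil_cons lo b k ws : stacked lo b k ws -> stacked lo b k ([::] :: ws).
Proof. by move=> hs; exists 0; rewrite addn0 !subn0; split=> // y; rewrite in_nil; lia. Qed.

Lemma stacked0 lo k ws : stacked lo 0 k ws <-> ws = nseq (size ws) [::] /\ k = 0.
Proof.
elim: ws lo k => [|w ws IH] lo k /=; first by split=> [[_ ->]|[_ ->]].
split=> [[n [hn _ hw _ hs]]|[[-> e] ->]]; last by apply: stacked_nil_cons; apply/IH.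
move: hn hw hs; rewrite leqn0 => /eqP -> /spans0 -> /=; rewrite addn0 !subn0.
by case/IH => {1}-> ->.
Qed.

Definition graft (x : nat) (t : seq nat) (ws : seq (seq nat)) : seq (seq nat) :=
  if ws is g :: a :: rest then (a ++ x :: g ++ t) :: rest else [::].

Lemma stacked_graft lo b k t g a rest : t = [::] \/ t = [:: lo.+1] ->
    stacked lo.+1 b k (g :: a :: rest) ->
  stacked lo b.+1 (k + size t).+1 (graft lo.+1 t (g :: a :: rest)).
Proof.
move=> ht [n1 [hn1 hkg hg hbg [n2 [hn2 hka ha hba hs]]]] /=; set x := lo.+1.
have htx y : y \in t -> y = x by case: ht => -> //; rewrite inE => /eqP.
have hst : size t <= 1 by case: ht => ->.
exists (n1 + n2).+1; split.
- lia.
- by rewrite size_cat /= size_cat; lia.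
- move=> y; rewrite !(mem_cat, inE) hg ha.
  by case: (boolP (y \in t)) => [/htx ->|_]; rewrite /x; lia.
- apply: admissible_cat => //.
    by apply: admissible_wrap => // y; rewrite hg; lia.
  by move=> y z; rewrite ha !(inE, mem_cat) hg => hy /or3P [/eqP ->|hz|/htx ->]; lia.
- move: hs; rewrite size_cat /= size_cat.
  have -> : x + n1 + n2 = lo + (n1 + n2).+1 by lia.
  have -> : b - n1 - n2 = b.+1 - (n1 + n2).+1 by lia.
  by have -> : k - size g - size a = (k + size t).+1 - (size a + (size g + size t).+1) by lia.
Qed.

Lemma stacked_cons_inv lo b k w rest : stacked lo b.+1 k (w :: rest) ->
  (w = [::] /\ stacked lo b.+1 k rest) \/
  exists g a t k0, [/\ w :: rest = graft lo.+1 t (g :: a :: rest),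
    t = [::] \/ t = [:: lo.+1], k = (k0 + size t).+1 & stacked lo.+1 b k0 (g :: a :: rest)].
Proof.
case=> [[|n] [hn hk hw hbw hs]].
  by move/spans0: hw hs => -> /=; rewrite addn0 !subn0; left.
have [a [g [t [n1 [ew ht hn1 [hba hbg hg ha]]]]]] := admissible_decomp hbw hw.
have hsw : size w = size a + (size g + size t).+1 by rewrite ew size_cat /= size_cat.
right; exists g, a, t, (k - (size t).+1); split; rewrite ?ew //; first lia.
exists n1; split=> //; first lia; first lia.
exists (n - n1); split=> //; first lia; first lia.
move: hs; have -> : lo + n.+1 = lo.+1 + n1 + (n - n1) by lia.
have -> : b.+1 - n.+1 = b - n1 - (n - n1) by lia.
by have -> : k - size w = k - (size t).+1 - size g - size a by lia.
Qed.

(* A stack of m > 0 words either begins with an empty word or arises by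
   grafting the first two words of a stack of m + 1 words (admissible_decomp);
   this is the recursion of ballot below. *)
Fixpoint stacks (b : nat) : nat -> nat -> nat -> seq (seq (seq nat)) :=
  match b with
  | 0 => fun m lo k => if k == 0 then [:: nseq m [::]] else [::]
  | b'.+1 => fix stacks_b m lo k {struct m} :=
      match m with
      | 0 => [::]
      | m'.+1 => [seq [::] :: ws | ws <- stacks_b m' lo k] ++
          (if k is k'.+1 then [seq graft lo.+1 [::] ws | ws <- stacks b' m'.+2 lo.+1 k'] ++
             (if k' is k''.+1 then [seq graft lo.+1 [:: lo.+1] ws | ws <- stacks b' m'.+2 lo.+1 k'']
              else [::])
           else [::])
      end
  end.

Lemma stacksS0 b lo k : stacks b.+1 0 lo k = [::].
Proof. by []. Qed.

Lemma stacksSS b m lo k : stacks b.+1 m.+1 lo k =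
  [seq [::] :: ws | ws <- stacks b.+1 m lo k] ++
    (if k is k'.+1 then [seq graft lo.+1 [::] ws | ws <- stacks b m.+2 lo.+1 k'] ++
       (if k' is k''.+1 then [seq graft lo.+1 [:: lo.+1] ws | ws <- stacks b m.+2 lo.+1 k'']
        else [::])
     else [::]).
Proof. by []. Qed.

Arguments stacks : simpl never.

Lemma mem_stacks b m lo k ws : ws \in stacks b m lo k <-> size ws = m /\ stacked lo b k ws.
Proof.
elim: b m lo k ws => [|b IHb] m lo k ws.
  rewrite /stacks stacked0; case: eqP => [->|nk]; last by split=> // [[_ []]].
  by rewrite inE; split=> [/eqP ->|[<- [e _]]]; [rewrite size_nseq | apply/eqP].
elim: m lo k ws => [|m IHm] lo k ws; first by rewrite stacksS0; split=> // [[/size0nil -> []]].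
have graftP t k' : t = [::] \/ t = [:: lo.+1] -> k = (k' + size t).+1 ->
    ws \in [seq graft lo.+1 t v | v <- stacks b m.+2 lo.+1 k'] ->
  size ws = m.+1 /\ stacked lo b.+1 k ws.
  move=> ht -> /mapP [[|g [|a rest]] /IHb [//= [hs] hv] ->].
  by split; [rewrite /= hs | exact: stacked_graft].
rewrite stacksSS mem_cat; split.
  case/orP => [/mapP [v /IHm [hs hv] ->]|]; first by split; [rewrite /= hs | exact: stacked_nil_cons].
  case: k graftP => [//|k] graftP; rewrite mem_cat => /orP [/graftP|]; first by apply; [left|rewrite addn0].
  by case: k graftP => [//|k] graftP /graftP; apply; [right|rewrite addn1].
case: ws graftP => [|w rest] _ [] // [hs] /stacked_cons_inv [[-> hr]|[g [a [t [k0 [-> ht -> hv]]]]]].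
  by apply/orP; left; apply: map_f; apply/IHm.
have hgen : g :: a :: rest \in stacks b m.+2 lo.+1 k0 by apply/IHb; rewrite /= hs.
apply/orP; right; case: ht => ->; rewrite ?addn0 ?addn1 /= mem_cat.
  by rewrite (map_f _ hgen).
by rewrite (map_f _ hgen) orbT.
Qed.

Lemma mem_stacks_pivot b m lo k ws : ws \in stacks b m.+2 lo.+1 k ->
  exists g a rest, [/\ ws = g :: a :: rest, lo.+1 \notin g & lo.+1 \notin a].
Proof.
case/mem_stacks; case: ws => [|g [|a rest]] // _ [n1 [_ _ hg _ [n2 [_ _ ha _ _]]]].
by exists g, a, rest; rewrite hg ha; split=> //; lia.
Qed.

Lemma graft_inj b m lo k t : {in stacks b m.+2 lo.+1 k &, injective (graft lo.+1 t)}.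
Proof.
move=> _ _ /mem_stacks_pivot [g [a [r [-> hg ha]]]] /mem_stacks_pivot [g' [a' [r' [-> hg' ha']]]].
case=> /eq_pivot -/(_ ha ha') [-> e] ->; congr [:: _, _ & _].
have /eqP : size (g ++ t) = size (g' ++ t) by rewrite e.
by rewrite !size_cat eqn_add2r => /eqP hsz; move/eqP: e; rewrite eqseq_cat // => /andP [/eqP].
Qed.

Lemma stacks_uniq b m lo k : uniq (stacks b m lo k).
Proof.
elim: b m lo k => [|b IHb] m lo k; first by rewrite /stacks; case: ifP.
elim: m lo k => [|m IHm] lo k; first by rewrite stacksS0.
(* The three parts of stacksSS differ in how often lo.+1 occurs in the first word. *)
have tag0 ws : ws \in [seq [::] :: v | v <- stacks b.+1 m lo k] -> count_mem lo.+1 (head [::] ws) = 0.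
  by case/mapP => v _ ->.
have tagS t k' ws : ws \in [seq graft lo.+1 t v | v <- stacks b m.+2 lo.+1 k'] ->
    count_mem lo.+1 (head [::] ws) = (count_mem lo.+1 t).+1.
  case/mapP => _ /mem_stacks_pivot [g [a [r [-> hg ha]]]] ->.
  by rewrite /= !count_cat /= eqxx count_cat (count_memPn hg) (count_memPn ha).
have uniq_graft t k' : uniq [seq graft lo.+1 t v | v <- stacks b m.+2 lo.+1 k'].
  by rewrite map_inj_in_uniq ?IHb //; apply: graft_inj.
rewrite stacksSS cat_uniq map_inj_uniq ?IHm; last by move=> ? ? [].
case: k tag0 => [|[|k]] tag0 //=; rewrite ?cats0 ?cat_uniq !uniq_graft ?andbT.
  by apply/hasPn => ws /tagS e; apply/negP => /tag0; rewrite e.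
apply/and3P; split=> //.
  by apply/hasPn => ws; rewrite mem_cat => /orP [] /tagS e; apply/negP => /tag0; rewrite e.
by apply/hasPn => ws /tagS e; apply/negP => /tagS; rewrite e /= eqxx.
Qed.

(* The number of sequences of m binary trees with n nodes in total,
   m/(2n+m) binom(2n+m, n), written without division. *)
Definition ballot (m n : nat) : nat :=
  'C(n.*2 + m - 1, n) - (if n is n'.+1 then 'C(n.*2 + m - 1, n') else 0).

(* The number of ways to write k as an ordered sum of b terms equal to 1 or 2. *)
Definition compositions12 (b k : nat) : nat := 'C(b, k - b) * (b <= k).

Lemma leq_binS N j : j.+1 <= N - j -> 'C(N, j) <= 'C(N, j.+1).
Proof.
move=> h; rewrite -(leq_pmul2l (ltn0Sn j)) mul_bin_left.
by rewrite leq_mul2r h orbT.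
Qed.

Lemma ballotm0 m : ballot m 0 = 1.
Proof. by rewrite /ballot bin0. Qed.

Lemma ballot0S n : ballot 0 n.+1 = 0.
Proof.
rewrite /ballot addn0 doubleS subSS -(@bin_sub n.*2.+1 n); last lia.
by rewrite (_ : n.*2.+1 - n = n.+1) ?subnn //; lia.
Qed.

Lemma ballotSS m n : ballot m.+1 n.+1 = ballot m n.+1 + ballot m.+2 n.
Proof.
rewrite /ballot; set N := n.*2 + m.
have -> : n.+1.*2 + m.+1 - 1 = N.+2 by rewrite /N doubleS; lia.
have -> : n.+1.*2 + m - 1 = N.+1 by rewrite /N doubleS; lia.
have -> : n.*2 + m.+2 - 1 = N.+1 by rewrite /N; lia.
have le1 : 'C(N.+1, n) <= 'C(N.+1, n.+1) by apply: leq_binS; rewrite /N; lia.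
rewrite binS; case: n @N le1 => [|n] N le1; first by rewrite !bin0 in le1 *; lia.
have le2 : 'C(N.+1, n) <= 'C(N.+1, n.+1) by apply: leq_binS; rewrite /N; lia.
rewrite (binS N.+1 n); lia.
Qed.

Lemma ballot1 n : ballot 1 n = catalan n.
Proof.
rewrite /catalan -[LHS](mulKn _ (ltn0Sn n)); congr (_ %/ _).
rewrite /ballot addn1 subn1 /=; case: n => [//|n].
have e := mul_bin_left n.+1.*2 n.
have le : 'C(n.+1.*2, n) <= 'C(n.+1.*2, n.+1) by apply: leq_binS; rewrite doubleS; lia.
rewrite (_ : n.+1.*2 - n = n.+2) in e; last by rewrite doubleS; lia.
by rewrite mulnBr -e -mulnBl subSnn mul1n.
Qed.

Lemma compositions12S b k : compositions12 b.+1 k =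
  if k is k'.+1 then compositions12 b k' + (if k' is k''.+1 then compositions12 b k'' else 0)
  else 0.
Proof.
rewrite /compositions12; case: k => [|k]; first by rewrite muln0.
rewrite ltnS subSS; case: (ltngtP b k) => [lt|gt|<-].
- case: k lt => [//|k]; rewrite ltnS => le.
  by rewrite subSn // binS le !muln1.
- by case: k gt => [|k] gt; rewrite !muln0 // [b <= k]leqNgt (ltnW gt) muln0.
- by case: b => [|b]; rewrite subnn bin0 ?ltnn ?muln0.
Qed.

Lemma size_stacks b m lo k : size (stacks b m lo k) = ballot m b * compositions12 b k.
Proof.
elim: b m lo k => [|b IHb] m lo k.
  by rewrite /stacks ballotm0 /compositions12 subn0 bin0n muln1; case: eqP.
elim: m lo k => [|m IHm] lo k; first by rewrite stacksS0 ballot0S.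
rewrite stacksSS ballotSS mulnDl size_cat size_map IHm compositions12S; congr (_ + _).
by case: k => [|[|k]]; rewrite ?muln0 // ?size_cat !size_map !IHb ?addn0 ?mulnDr.
Qed.

Lemma stacked1 b k w : stacked 0 b k [:: w] <-> [/\ size w = k, spans 0 b w & admissible w].
Proof.
split=> [[n [hn hk hw hadm [hb hk0]]]|[hsz hw hadm]].
  have -> : b = n by lia.
  by split=> //; lia.
by exists b; rewrite hsz !subnn.
Qed.

Lemma word_of_inj b k : injective (@word_of b k).
Proof.
have inj_succ_val : injective (fun i : 'I_b => (val i).+1) by move=> i j /succn_inj /val_inj.
by move=> t t' /(inj_map inj_succ_val) /val_inj.
Qed.

Lemma spans_word_of b k (t : k.-tuple 'I_b) :
  spans 0 b (word_of t) <-> [forall i : 'I_b, i \in t].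
Proof.
split=> [hs|/forallP ht y].
  apply/forallP => i; have : (val i).+1 \in word_of t by rewrite hs add0n ltn_ord.
  by rewrite mem_map // => i1 i2 /succn_inj /val_inj.
apply/mapP/idP => [[i _ ->]|hy]; first by rewrite /= ltn_ord.
have hyb : y.-1 < b by lia.
by exists (Ordinal hyb) => //=; lia.
Qed.

Lemma word_of_onto b k w : size w = k -> spans 0 b.+1 w ->
  exists t : k.-tuple 'I_b.+1, word_of t = w.
Proof.
move=> hsz hw; have hsz' : size [seq inord y.-1 : 'I_b.+1 | y <- w] == k by rewrite size_map hsz.
exists (Tuple hsz'); rewrite /word_of /= -map_comp -[RHS]map_id; apply/eq_in_map => y.
by rewrite hw /= => hy; rewrite inordK; lia.
Qed.

Theorem mainTheorem10 (b k : nat) (hb : 1 <= b) (hbk : b <= k) :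
  #|[set w : k.-tuple 'I_b |
      [&& [forall i : 'I_b, i \in w],
          avoids (word_of w) [:: 1; 1; 1],
          avoids (word_of w) [:: 2; 1; 2],
          avoids (word_of w) [:: 1; 1; 2] &
          avoids (word_of w) [:: 2; 1; 3]]]|
  = 'C(b, k - b) * catalan b.
Proof.
case: b hb hbk => [//|b] _ hbk.
have -> : 'C(b.+1, k - b.+1) * catalan b.+1 = size (stacks b.+1 1 0 k).
  by rewrite size_stacks ballot1 /compositions12 hbk muln1 mulnC.
rewrite cardE -(size_map (fun t => [:: word_of t])); apply/perm_size/uniq_perm.
- by rewrite map_inj_uniq ?enum_uniq // => t t' [/word_of_inj].
- exact: stacks_uniq.
move=> ws; apply/mapP/idP => [[t]|/mem_stacks].
  rewrite mem_enum inE => /andP [/spans_word_of hw /avoids_forbidden hadm] ->.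
  by apply/mem_stacks; split=> //; apply/stacked1; rewrite size_map size_tuple.
case: ws => [|w [|? ?]] [//= _ /stacked1 [hsz hw hadm]].
have [t ew] := word_of_onto hsz hw; subst w; exists t => //.
by rewrite mem_enum inE; apply/andP; split; [apply/spans_word_of | apply/avoids_forbidden].
Qed.
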